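(* Let $q,r$ be coprime integers with $0<q\le r$, and let $K,N$ be integers with $1\le N\le K$ and $N\equiv 1\pmod r$. Call a partition $\lambda=(1^{k_1}2^{k_2}\cdots N^{k_N})\vdash N$ a permissible configuration if (C1) $\ell(\lambda)\le K$; (C2) $\ell(\lambda^* )\le r-q+1$ (no part exceeds $r-q+1$); and (C3) $\sum_{i\ge 2}k_i\le \frac{N-1}{r}\le\frac{K-1}{q}$. Then the number of permissible configurations is \[ \binom{(N-1)/r+r-q}{r-q}. \]
   Context: A partition $\lambda\vdash N$ is a non-increasing sequence of positive integers summing to $N$, written $\lambda=(1^{k_1}2^{k_2}\cdots N^{k_N})$ with $k_i$ the number of parts equal to $i$; $\ell(\lambda)=\sum_i k_i$ is its length, and $\lambda^*$ denotes the conjugate partition (transpose Ferrers diagram), so $\ell(\lambda^* )$ is the largest part of $\lambda$. *)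

From mathcomp Require Import all_boot.
Set Implicit Arguments. Unset Strict Implicit. Unset Printing Implicit Defensive.

Definition is_partition (N : nat) (l : seq nat) : bool :=
  [&& sorted geq l, all (fun x => 0 < x) l & sumn l == N].

Definition mult (l : seq nat) (i : nat) : nat := count_mem i l.

Definition plen (l : seq nat) : nat := size l.

(* ell(conjugate of lambda) = largest part of lambda (length of the conjugate partition) *)
Definition conj_len (l : seq nat) : nat := \max_(x <- l) x.

Definition big_parts (N : nat) (l : seq nat) : nat := \sum_(2 <= i < N.+1) mult l i.

(* Permissible configuration (C1)-(C3).  The second inequality of (C3),
   (N-1)/r <= (K-1)/q, is expressed over nat as ((N-1)/r) * q <= K-1,
   which is equivalent since q > 0 and r | N-1. *)
Definition permissible (q r K N : nat) (l : seq nat) : bool :=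
  [&& is_partition N l,
      plen l <= K,
      conj_len l <= r - q + 1,
      big_parts N l <= (N - 1) %/ r
    & ((N - 1) %/ r) * q <= K - 1].

From mathcomp Require Import all_boot zify.

Set Implicit Arguments.
Unset Strict Implicit.
Unset Printing Implicit Defensive.

(* A permissible configuration is determined by its parts greater than 1: with
   M = (N - 1) / r, these form a non-increasing sequence of at most M values in
   [2, r - q + 1], and any such sequence sums to at most M (r - q + 1) <= N - 1,
   so it extends to a unique partition of N by parts equal to 1, whose length
   is at most N <= K.  Such sequences are counted by Pascal's rule:
   binomial (M + (r - q), r - q). *)

Lemma geq_trans : transitive geq.
Proof. exact: rev_trans leq_trans. Qed.

Lemma geq_anti : antisymmetric geq.
Proof. by move=> x y; rewrite andbC => /anti_leq. Qed.

Lemma mem_map_cons (T : eqType) (a x : T) t s :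
  (x :: t \in map (cons a) s) = (x == a) && (t \in s).
Proof. by apply/mapP/andP => [[u hu [-> ->]]|[/eqP -> h]]; last exists t. Qed.

Lemma all_range_le_head lo hi x t :
  all (geq x) t -> x <= hi -> all (fun y => lo < y <= hi) t = all (ltn lo) t.
Proof.
move=> /allP t_le x_hi; apply: eq_in_all => y /t_le /= y_x.
by rewrite (leq_trans y_x x_hi) andbT.
Qed.

Section DecreasingSequences.

Variable b : nat.

Definition decr_bounded m M (t : seq nat) :=
  [&& sorted geq t, all (fun x => b < x <= b + m) t & size t <= M].

(* Pascal's rule: either no entry reaches the top value [b + m], or the
   sequence starts with it. *)
Fixpoint enum_decr m M : seq (seq nat) :=
  if m is m'.+1 then
    let fix enum_top M :=
      if M is M'.+1 then enum_decr m' M ++ map (cons (b + m)) (enum_top M')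
      else [:: [::]] in
    enum_top M
  else [:: [::]].

Lemma enum_decrS m M :
  enum_decr m.+1 M.+1 = enum_decr m M.+1 ++ map (cons (b + m.+1)) (enum_decr m.+1 M).
Proof. by []. Qed.

Lemma decr_bounded_gt m M t : decr_bounded m M t -> all (fun x => b < x) t.
Proof. by case/and3P=> _ t_range _; apply: sub_all t_range => x /andP[]. Qed.

Lemma mem_enum_decr m M t : (t \in enum_decr m M) = decr_bounded m M t.
Proof.
rewrite /decr_bounded; elim: m M t => [|m IHm] M t.
  case: t => [|x t]; rewrite inE //=.
  by apply/esym/negbTE/negP => /and3P[_ /andP[/andP[]]]; lia.
elim: M t => [|M IHM] t; first by case: t => [|x t]; rewrite inE //= ?andbF.
rewrite enum_decrS mem_cat IHm; case: t => [|x t] //=.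
rewrite mem_map_cons IHM !(path_sortedE geq_trans) ltnS.
have [->|x_neq] := eqVneq x (b + m.+1).
  rewrite addnS ltnn !andbF /= ltnS leq_addr leqnn /=.
  have [t_le|] := boolP (all (fun y => b < y <= (b + m).+1) t); last by rewrite !andbF.
  by rewrite (sub_all _ t_le) // => y /andP[].
rewrite orbF [x <= b + m.+1]leq_eqVlt (negbTE x_neq) /= addnS ltnS.
have [x_le|] := boolP (all (geq x) t); last by [].
have [x_top|] := boolP (x <= b + m); last by rewrite !andbF.
by rewrite !(all_range_le_head b x_le) // leqW.
Qed.

Lemma uniq_enum_decr m M : uniq (enum_decr m M).
Proof.
elim: m M => [|m IHm] M //; elim: M => [|M IHM] //.
rewrite enum_decrS cat_uniq IHm map_inj_uniq ?IHM; last by move=> ? ? [].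
rewrite andbT /=; apply/hasPn => _ /mapP[t _ ->].
by rewrite mem_enum_decr /decr_bounded /= addnS ltnn andbF /= andbF.
Qed.

Lemma size_enum_decr m M : size (enum_decr m M) = 'C(M + m, m).
Proof.
elim: m M => [|m IHm] M; first by rewrite bin0.
elim: M => [|M IHM]; first by rewrite binn.
by rewrite enum_decrS size_cat size_map IHm IHM !addnS !addSn [RHS]binS addnC.
Qed.

End DecreasingSequences.

Lemma sum_count_mem_nat a c (s : seq nat) :
  \sum_(a <= i < c) count_mem i s = count (fun x => a <= x < c) s.
Proof.
elim: s => [|x s IH]; first by rewrite big1.
rewrite big_split /= IH; congr (_ + _).
rewrite (eq_bigr (fun i => if i == x then 1 else 0)) => [|i _]; last first.
  by rewrite eq_sym; case: (i == x).
rewrite -big_mkcond sum1_count /=.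
by rewrite (count_uniq_mem _ (iota_uniq _ _)) mem_index_iota.
Qed.

Lemma sumn_le_size_mul c t : all (fun x => x <= c) t -> sumn t <= size t * c.
Proof. by elim: t => //= x t IH /andP[x_le /IH]; rewrite mulSn; apply: leq_add. Qed.

Lemma size_le_sumn t : all (fun x => 0 < x) t -> size t <= sumn t.
Proof. by elim: t => //= x t IH /andP[x_gt0 /IH]; rewrite -add1n; apply: leq_add. Qed.

Lemma mem_leq_sumn x s : x \in s -> x <= sumn s.
Proof. by move=> x_s; rewrite sumnE (big_rem x) ?leq_addr. Qed.

Lemma big_parts_le_count N l : big_parts N l <= count (fun x => 1 < x) l.
Proof. by rewrite /big_parts sum_count_mem_nat; apply: sub_count => x /andP[]. Qed.

Lemma div_mul_succ_sub_le q r n : 0 < q -> n %/ r * (r - q).+1 <= n.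
Proof.
move=> q_gt0; have [->|r_gt0] := posnP r; first by rewrite divn0.
apply: leq_trans (leq_divM n r); rewrite leq_mul2l; apply/orP; right; lia.
Qed.

Definition pad_ones N t := t ++ nseq (N - sumn t) 1.

Lemma filter_pad_ones N t :
  all (fun x => 1 < x) t -> [seq x <- pad_ones N t | 1 < x] = t.
Proof. by move=> t_big; rewrite filter_cat filter_nseq /= (all_filterP t_big) cats0. Qed.

Lemma sorted_pad_ones N t :
  sorted geq t -> all (fun x => 0 < x) t -> sorted geq (pad_ones N t).
Proof.
move=> t_sorted t_pos; rewrite !(sorted_pairwise geq_trans) in t_sorted *.
rewrite pairwise_cat t_sorted /=; apply/andP; split.
  by apply/allrelP => x y /(allP t_pos) ? /nseqP[->].
by elim: (N - sumn t) => //= k ->; rewrite all_nseq orbT.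
Qed.

Lemma is_partition_pad_ones N t :
  sorted geq t -> all (fun x => 0 < x) t -> sumn t <= N ->
  is_partition N (pad_ones N t).
Proof.
move=> t_sorted t_pos t_sum; rewrite /is_partition sorted_pad_ones //= all_cat t_pos.
by rewrite all_nseq orbT sumn_cat sumn_nseq mul1n (subnKC t_sum) eqxx.
Qed.

Lemma pad_ones_filter N l :
  is_partition N l -> pad_ones N [seq x <- l | 1 < x] = l.
Proof.
move=> /and3P[l_sorted l_pos /eqP l_sum].
set big := [seq x <- l | 1 < x]; set ones := [seq x <- l | ~~ (1 < x)].
have ones_nseq : ones = nseq (size ones) 1.
  apply/all_pred1P; rewrite all_filter.
  by apply: sub_all l_pos => x /=; case: x => [|[|x]].
have l_perm : perm_eq (big ++ ones) l by rewrite perm_filterC.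
have big_pos : all (fun x => 0 < x) big.
  by apply: sub_all (filter_all _ l) => x; apply: ltnW.
have pad_big : pad_ones N big = big ++ ones.
  rewrite /pad_ones -l_sum -(perm_sumn l_perm) sumn_cat addKn [in RHS]ones_nseq.
  by rewrite ones_nseq sumn_nseq mul1n size_nseq.
have big_sorted : sorted geq big := sorted_filter geq_trans _ l_sorted.
apply: (sorted_eq geq_trans geq_anti) (sorted_pad_ones N big_sorted big_pos) l_sorted _.
by rewrite pad_big.
Qed.

Lemma size_pad_ones N t :
  all (fun x => 0 < x) t -> sumn t <= N -> size (pad_ones N t) <= N.
Proof. by move=> /size_le_sumn t_size t_sum; rewrite size_cat size_nseq; lia. Qed.

Lemma conj_len_pad_ones N c t :
  0 < c -> all (fun x => x <= c) t -> conj_len (pad_ones N t) <= c.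
Proof.
move=> c_gt0 /allP t_le; apply/bigmax_leqP_seq => x + _.
by rewrite mem_cat => /orP[/t_le //|/nseqP[->]].
Qed.

Lemma permissible_pad_ones q r K N t :
  0 < q -> N <= K -> (N - 1) %/ r * q <= K - 1 ->
  decr_bounded 1 (r - q) ((N - 1) %/ r) t -> permissible q r K N (pad_ones N t).
Proof.
move=> q_gt0 N_le_K MqK t_bd; have t_big := decr_bounded_gt t_bd.
case/and3P: t_bd => t_sorted t_range t_size.
have t_pos : all (fun x => 0 < x) t by apply: sub_all t_big => x; apply: ltnW.
have t_le : all (fun x => x <= (r - q).+1) t.
  by apply: sub_all t_range => x /andP[_]; rewrite add1n.
have t_sum : sumn t <= N.
  apply: leq_trans (sumn_le_size_mul t_le) (leq_trans _ (leq_subr 1 N)).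
  apply: leq_trans _ (div_mul_succ_sub_le r _ q_gt0).
  by rewrite leq_mul2r t_size orbT.
apply/and5P; split=> //; first exact: is_partition_pad_ones.
- exact: leq_trans (size_pad_ones t_pos t_sum) N_le_K.
- by rewrite addn1 conj_len_pad_ones.
- apply: leq_trans (big_parts_le_count _ _) _.
  by rewrite -size_filter filter_pad_ones.
Qed.

Lemma filter_permissible q r K N l :
  permissible q r K N l -> decr_bounded 1 (r - q) ((N - 1) %/ r) [seq x <- l | 1 < x].
Proof.
move=> /and5P[l_part _ l_conj l_big _]; have /and3P[l_sorted _ /eqP l_sum] := l_part.
rewrite /decr_bounded (sorted_filter geq_trans) //=; apply/andP; split.
  rewrite all_filter; apply/allP => x x_l; apply/implyP => /= ->.
  rewrite add1n -addn1; apply: leq_trans l_conj; exact: leq_bigmax_seq.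
rewrite size_filter; apply: leq_trans l_big; apply: eq_leq.
rewrite /big_parts sum_count_mem_nat; apply: eq_in_count => x x_l /=.
by rewrite ltnS -l_sum mem_leq_sumn // andbT.
Qed.

Theorem proposition3 (q r K N : nat) :
  coprime q r -> 0 < q -> q <= r ->
  1 <= N -> N <= K -> N = 1 %[mod r] ->
  ((N - 1) %/ r) * q <= K - 1 ->
  exists s : seq (seq nat),
    [/\ uniq s,
        (forall l, (l \in s) = permissible q r K N l)
      & size s = 'C((N - 1) %/ r + (r - q), r - q)].
Proof.
move=> _ q_gt0 _ _ N_le_K _ MqK.
exists (map (pad_ones N) (enum_decr 1 (r - q) ((N - 1) %/ r))); split.
- rewrite map_inj_in_uniq ?uniq_enum_decr // => t u.
  rewrite !mem_enum_decr => /decr_bounded_gt t_big /decr_bounded_gt u_big.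
  by move/(congr1 (filter (fun x => 1 < x))); rewrite !filter_pad_ones.
- move=> l; apply/mapP/idP => [[t + ->]|l_perm].
    by rewrite mem_enum_decr; apply: permissible_pad_ones.
  exists [seq x <- l | 1 < x]; first by rewrite mem_enum_decr (filter_permissible l_perm).
  by rewrite pad_ones_filter //; case/and5P: l_perm.
- by rewrite size_map size_enum_decr.
Qed.
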